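(* For all $\lambda,\alpha,\beta>0$, $X\sim\mathrm{MLFD}(\lambda,\alpha,\beta)$ has increasing failure rate: the function $r(t)=P(X=t)/P(X\ge t)$ is nondecreasing in $t\in\{0,1,2,\dots\}$.
   Context: For $\alpha>0,\beta>0$ and $z\in\mathbb{C}$, the generalized Mittag-Leffler function is $E_{\alpha,\beta}(z)=\sum_{k=0}^\infty z^k/\Gamma(\alpha k+\beta)$. For $\lambda,\alpha,\beta>0$, the Mittag-Leffler function distribution $\mathrm{MLFD}(\lambda,\alpha,\beta)$ is the distribution on $\{0,1,2,\dots\}$ with $P(X=k)=\lambda^k/\{\Gamma(\alpha k+\beta)E_{\alpha,\beta}(\lambda)\}$. *)

From Stdlib Require Import Reals ClassicalEpsilon.
Open Scope R_scope.

(* Euler's integral: g is the value of the improper Riemann integral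
   int_0^oo t^(x-1) e^(-t) dt, i.e. the limit of int_a^b as a -> 0+, b -> +oo. *)
Definition Gamma_integrand (x : R) : R -> R :=
  fun t => Rpower t (x - 1) * exp (- t).

Definition is_Gamma (x g : R) : Prop :=
  forall eps : R, 0 < eps -> exists M : R, 1 < M /\
    forall a b : R, 0 < a -> a < / M -> M < b ->
      exists pr : Riemann_integrable (Gamma_integrand x) a b,
        Rabs (RiemannInt pr - g) < eps.

(* The Gamma function (meaningful for x > 0, where the integral converges). *)
Definition Gamma (x : R) : R := epsilon (inhabits 0) (is_Gamma x).

Definition series (u : nat -> R) : R := epsilon (inhabits 0) (infinite_sum u).

Definition ML (alpha beta z : R) : R :=
  series (fun k => z ^ k / Gamma (alpha * INR k + beta)).

Definition mlfd_pmf (lambda alpha beta : R) (k : nat) : R :=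
  lambda ^ k / (Gamma (alpha * INR k + beta) * ML alpha beta lambda).

Definition mlfd_tail (lambda alpha beta : R) (t : nat) : R :=
  series (fun j => mlfd_pmf lambda alpha beta (t + j)).

Definition mlfd_rate (lambda alpha beta : R) (t : nat) : R :=
  mlfd_pmf lambda alpha beta t / mlfd_tail lambda alpha beta t.

From Stdlib Require Import Reals Lra Classical ClassicalEpsilon.
From Coquelicot Require Import Coquelicot.
Open Scope R_scope.

(* Euler's integral is log-convex (Hoelder's inequality), so for [0 < x <= y] and
   [h >= 0] we get [Gamma (x + h) Gamma y <= Gamma x Gamma (y + h)].  With the weights
   [q_k = lambda^k / Gamma (alpha k + beta)] this reads [q_s q_(t+j) <= q_t q_(s+j)]
   for [s <= t]; summing over [j] gives [q_s T_t <= q_t T_s] for the tail sums [T],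
   i.e. [r s <= r t], the normalizing constant [E_(alpha,beta)(lambda)] cancelling.
   The tails converge because [Gamma (alpha k + beta)] eventually dominates any
   geometric sequence, as seen from a crude lower bound on the integral. *)

Lemma exp_le_compat a b : a <= b -> exp a <= exp b.
Proof. intros [H | <-]; [now apply Rlt_le, exp_increasing | apply Rle_refl]. Qed.

Lemma Gamma_integrand_exp x t : 0 < t ->
  Gamma_integrand x t = exp ((x - 1) * ln t - t).
Proof.
intros Ht; unfold Gamma_integrand, Rpower; unfold Rminus at 2.
now rewrite exp_plus.
Qed.

Lemma Gamma_integrand_pos x t : 0 < t -> 0 < Gamma_integrand x t.
Proof. intros Ht; rewrite Gamma_integrand_exp by exact Ht; apply exp_pos. Qed.

Lemma ex_RInt_Gamma_integrand x a b : 0 < a -> a <= b ->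
  ex_RInt (Gamma_integrand x) a b.
Proof.
intros Ha Hab; apply (@ex_RInt_continuous R_CompleteNormedModule).
intros t Ht; rewrite Rmin_left in Ht by exact Hab.
apply (@ex_derive_continuous R_AbsRing R_NormedModule).
unfold Gamma_integrand, Rpower; auto_derive; lra.
Qed.

Lemma RInt_Gamma_integrand_Chasles x a b c : 0 < a -> a <= b -> b <= c ->
  RInt (Gamma_integrand x) a c =
  RInt (Gamma_integrand x) a b + RInt (Gamma_integrand x) b c.
Proof.
intros Ha Hab Hbc; symmetry.
apply (@RInt_Chasles R_CompleteNormedModule); apply ex_RInt_Gamma_integrand; lra.
Qed.

Lemma RInt_Gamma_integrand_ge0 x a b : 0 < a -> a <= b ->
  0 <= RInt (Gamma_integrand x) a b.
Proof.
intros Ha Hab; apply RInt_ge_0; [exact Hab | now apply ex_RInt_Gamma_integrand |].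
intros t Ht; apply Rlt_le, Gamma_integrand_pos; lra.
Qed.

Lemma RInt_Gamma_integrand_mono x a b c d : 0 < a -> a <= c -> c <= d -> d <= b ->
  RInt (Gamma_integrand x) c d <= RInt (Gamma_integrand x) a b.
Proof.
intros Ha Hac Hcd Hdb.
rewrite (RInt_Gamma_integrand_Chasles x a c b), (RInt_Gamma_integrand_Chasles x c d b)
  by lra.
assert (H1 := RInt_Gamma_integrand_ge0 x a c Ha Hac).
assert (H2 := RInt_Gamma_integrand_ge0 x d b ltac:(lra) Hdb).
lra.
Qed.

Lemma RInt_Gamma_integrand_near0_le x a : 0 < x -> 0 < a -> a <= 1 ->
  RInt (Gamma_integrand x) a 1 <= / x.
Proof.
intros Hx Ha Ha1.
set (F t := exp (x * ln t) / x).
assert (HF : is_RInt (fun t => Rpower t (x - 1)) a 1 (F 1 - F a)).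
{ apply (@is_RInt_derive R_CompleteNormedModule F).
  - intros t Ht; rewrite Rmin_left, Rmax_right in Ht by lra.
    unfold F; auto_derive; [lra |].
    unfold Rpower; replace ((x - 1) * ln t) with (x * ln t + - ln t) by ring.
    rewrite exp_plus, exp_Ropp, exp_ln by lra; field; lra.
  - intros t Ht; rewrite Rmin_left in Ht by lra.
    apply (@ex_derive_continuous R_AbsRing R_NormedModule).
    unfold Rpower; auto_derive; lra. }
apply Rle_trans with (F 1 - F a).
- rewrite <- (is_RInt_unique _ _ _ _ HF).
  apply RInt_le; [exact Ha1 | apply ex_RInt_Gamma_integrand; lra | eexists; exact HF |].
  intros t Ht; unfold Gamma_integrand.
  rewrite <- (Rmult_1_r (Rpower t (x - 1))) at 2.
  apply Rmult_le_compat_l; [apply Rlt_le, exp_pos |].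
  rewrite <- exp_0; apply exp_le_compat; lra.
- unfold F; rewrite ln_1, Rmult_0_r, exp_0.
  assert (0 < exp (x * ln a) / x) by (apply Rdiv_lt_0_compat; [apply exp_pos | exact Hx]).
  unfold Rdiv in *; lra.
Qed.

Lemma ln_le_linear t K : 0 < t -> 0 < K -> ln t <= ln K + t / K - 1.
Proof.
intros Ht HK; assert (H := exp_ineq1_le (ln (t / K))).
rewrite exp_ln in H by (apply Rdiv_lt_0_compat; assumption).
unfold Rdiv in *; rewrite ln_mult, ln_Rinv in H by (try apply Rinv_0_lt_compat; assumption).
lra.
Qed.

Lemma Gamma_integrand_le_exp_half x : exists C, 0 < C /\
  forall t, 1 <= t -> Gamma_integrand x t <= C * exp (- t / 2).
Proof.
set (y := x - 1); set (K := 2 * Rabs y + 2).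
assert (Hy := Rabs_pos y); assert (Hyy := RRle_abs y).
assert (HK : 0 < K) by (unfold K; lra).
(* [ln t <= ln K + t/K - 1] with [K = 2|y| + 2] gives [y ln t <= |y| ln K + t/2]. *)
exists (exp (Rabs y * ln K)); split; [apply exp_pos |].
intros t Ht; rewrite Gamma_integrand_exp by lra; rewrite <- exp_plus.
apply exp_le_compat; fold y.
assert (Hl := ln_le_linear t K ltac:(lra) HK).
assert (Hl0 : 0 <= ln t) by (rewrite <- ln_1; apply ln_le; lra).
assert (H1 : y * ln t <= Rabs y * ln t) by (apply Rmult_le_compat_r; assumption).
assert (H2 : Rabs y * ln t <= Rabs y * (ln K + t / K - 1))
  by (apply Rmult_le_compat_l; assumption).
assert (H3 : Rabs y * (t / K) <= t / 2).
{ unfold Rdiv; apply Rmult_le_reg_r with K; [exact HK |].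
  rewrite Rmult_assoc; field_simplify; [unfold K; nra | lra]. }
nra.
Qed.

Lemma RInt_Gamma_integrand_tail_bounded x : exists B,
  forall b, 1 <= b -> RInt (Gamma_integrand x) 1 b <= B.
Proof.
destruct (Gamma_integrand_le_exp_half x) as [C [HC Hle]].
set (F t := - 2 * C * exp (- t / 2)).
exists (- F 1); intros b Hb.
assert (HF : is_RInt (fun t => C * exp (- t / 2)) 1 b (F b - F 1)).
{ apply (@is_RInt_derive R_CompleteNormedModule F).
  - intros t _; unfold F; auto_derive; [easy |].
    replace (- t * / 2) with (- t / 2) by (unfold Rdiv; ring); field.
  - intros t _; apply (@ex_derive_continuous R_AbsRing R_NormedModule).
    unfold F; auto_derive; easy. }
apply Rle_trans with (F b - F 1).
- rewrite <- (is_RInt_unique _ _ _ _ HF).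
  apply RInt_le; [exact Hb | apply ex_RInt_Gamma_integrand; lra | eexists; exact HF |].
  intros t Ht; apply Hle; lra.
- assert (0 < C * exp (- b / 2)) by (apply Rmult_lt_0_compat; [exact HC | apply exp_pos]).
  unfold F; lra.
Qed.

Lemma RInt_Gamma_integrand_bounded x : 0 < x -> exists B,
  forall a b, 0 < a <= 1 -> 1 <= b -> RInt (Gamma_integrand x) a b <= B.
Proof.
intros Hx; destruct (RInt_Gamma_integrand_tail_bounded x) as [B HB].
exists (/ x + B); intros a b Ha Hb.
rewrite (RInt_Gamma_integrand_Chasles x a 1 b) by lra.
assert (H0 := RInt_Gamma_integrand_near0_le x a Hx ltac:(lra) ltac:(lra)).
specialize (HB b Hb); lra.
Qed.

Lemma is_lub_approx (E : R -> Prop) l eps : is_lub E l -> 0 < eps ->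
  exists y, E y /\ l - eps < y.
Proof.
intros [Hub Hl] He; apply NNPP; intros Hn.
assert (Hub' : is_upper_bound E (l - eps)).
{ intros y Hy; apply Rnot_lt_le; intros Hlt; apply Hn; now exists y. }
specialize (Hl _ Hub'); lra.
Qed.

(* The improper integral is the supremum of the integrals over [a, b] with
   [a <= 1 <= b], the integrand being positive. *)
Lemma is_Gamma_ex x : 0 < x -> exists g, is_Gamma x g.
Proof.
intros Hx; set (f := Gamma_integrand x).
set (E y := exists a b, 0 < a <= 1 /\ 1 <= b /\ y = RInt f a b).
assert (HE : bound E).
{ destruct (RInt_Gamma_integrand_bounded x Hx) as [B HB].
  exists B; intros y (a & b & Ha & Hb & ->); now apply HB. }
assert (HE0 : exists y, E y) by (exists (RInt f 1 1), 1, 1; repeat split; lra).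
destruct (completeness E HE HE0) as [g Hg]; exists g.
intros eps He.
destruct (is_lub_approx E g eps Hg He) as [y [(a0 & b0 & Ha0 & Hb0 & ->) Hy]].
assert (Hia : 0 < / a0) by (apply Rinv_0_lt_compat; lra).
set (M := Rmax 2 (Rmax b0 (/ a0))).
assert (HM1 : 2 <= M) by apply Rmax_l.
assert (HM2 : b0 <= M) by (eapply Rle_trans; [apply Rmax_l | apply Rmax_r]).
assert (HM3 : / a0 <= M) by (eapply Rle_trans; [apply Rmax_r | apply Rmax_r]).
exists M; split; [lra |]; intros a b Ha HaM HbM.
assert (Haa0 : a < a0).
{ apply Rlt_le_trans with (/ M); [exact HaM |].
  rewrite <- (Rinv_inv a0); apply Rinv_le_contravar; lra. }
exists (ex_RInt_Reals_0 _ _ _ (ex_RInt_Gamma_integrand x a b Ha ltac:(lra))).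
rewrite <- RInt_Reals; fold f.
assert (Hup : RInt f a b <= g).
{ apply Hg; exists a, b; repeat split; lra. }
assert (Hlow : RInt f a0 b0 <= RInt f a b)
  by (apply RInt_Gamma_integrand_mono; lra).
apply Rabs_def1; lra.
Qed.

Lemma Gamma_lim x : 0 < x ->
  is_lim_seq (fun n => RInt (Gamma_integrand x) (/ (INR n + 2)) (INR n + 2)) (Gamma x).
Proof.
intros Hx; apply is_lim_seq_spec; intros eps.
assert (HG : is_Gamma x (Gamma x)) by (unfold Gamma; apply epsilon_spec, is_Gamma_ex, Hx).
destruct (HG eps (cond_pos eps)) as [M [HM HMab]].
destruct (INR_unbounded M) as [N HN].
exists N; intros n Hn; apply le_INR in Hn.
assert (Hb : M < INR n + 2) by lra.
destruct (HMab (/ (INR n + 2)) (INR n + 2)) as [pr Hpr];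
  [apply Rinv_0_lt_compat; lra | apply Rinv_lt_contravar; nra | exact Hb |].
now rewrite (RInt_Reals _ _ _ pr).
Qed.

Lemma RInt_Gamma_integrand_le_Gamma x c d : 0 < x -> 0 < c -> c <= d ->
  RInt (Gamma_integrand x) c d <= Gamma x.
Proof.
intros Hx Hc Hcd.
refine (is_lim_seq_le_loc (fun _ => RInt (Gamma_integrand x) c d) _ _ _ _
  (is_lim_seq_const _) (Gamma_lim x Hx)).
destruct (INR_unbounded (Rmax d (/ c))) as [N HN].
assert (Hd := Rmax_l d (/ c)); assert (Hic := Rmax_r d (/ c)).
assert (Hc' : 0 < / c) by (apply Rinv_0_lt_compat, Hc).
exists N; intros n Hn; apply le_INR in Hn.
apply RInt_Gamma_integrand_mono; [apply Rinv_0_lt_compat; lra | | exact Hcd | lra].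
rewrite <- (Rinv_inv c); apply Rinv_le_contravar; lra.
Qed.

(* On [M, M + 1] we have [t^(x-1) >= M^(x-1) / 2] since [x - 1 > -1] and [t <= 2 M]. *)
Lemma Gamma_lower_bound x M : 0 < x -> 1 <= M ->
  Rpower M (x - 1) / 2 * exp (- (M + 1)) <= Gamma x.
Proof.
intros Hx HM; set (c := Rpower M (x - 1) / 2 * exp (- (M + 1))).
apply Rle_trans with (RInt (Gamma_integrand x) M (M + 1));
  [| apply RInt_Gamma_integrand_le_Gamma; lra].
apply Rle_trans with (RInt (fun _ => c) M (M + 1)).
{ rewrite RInt_const; cbn; unfold scal, mult; cbn; unfold mult; cbn; lra. }
apply RInt_le; [lra | apply ex_RInt_const | apply ex_RInt_Gamma_integrand; lra |].
intros t Ht; rewrite Gamma_integrand_exp by lra; unfold c, Rpower.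
replace (exp ((x - 1) * ln M) / 2) with (exp ((x - 1) * ln M + - ln 2))
  by (rewrite exp_plus, exp_Ropp, exp_ln by lra; reflexivity).
rewrite <- exp_plus; apply exp_le_compat.
assert (Hl2 : 0 < ln 2) by (rewrite <- ln_1; apply ln_increasing; lra).
assert (Ht1 : ln M <= ln t) by (apply ln_le; lra).
assert (Ht2 : ln t <= ln 2 + ln M) by (rewrite <- ln_mult by lra; apply ln_le; lra).
destruct (Rle_or_lt 0 (x - 1)).
- assert (0 <= (x - 1) * (ln t - ln M)) by (apply Rmult_le_pos; lra); nra.
- assert ((x - 1) * (ln t - ln M) >= - (ln t - ln M)) by nra; nra.
Qed.

Lemma Gamma_pos x : 0 < x -> 0 < Gamma x.
Proof.
intros Hx; eapply Rlt_le_trans; [| apply (Gamma_lower_bound x 1); lra].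
apply Rmult_lt_0_compat; [apply Rdiv_lt_0_compat; [apply exp_pos | lra] | apply exp_pos].
Qed.

Lemma exp_convex l u v : 0 <= l <= 1 ->
  exp (l * u + (1 - l) * v) <= l * exp u + (1 - l) * exp v.
Proof.
intros Hl; set (m := l * u + (1 - l) * v).
(* tangent line of [exp] at [m] *)
assert (Htan : forall w, exp m * (1 + (w - m)) <= exp w).
{ intros w; replace (exp w) with (exp m * exp (w - m)) by (rewrite <- exp_plus; f_equal; ring).
  apply Rmult_le_compat_l; [apply Rlt_le, exp_pos | apply exp_ineq1_le]. }
assert (Hu := Htan u); assert (Hv := Htan v).
assert (l * (exp m * (1 + (u - m))) <= l * exp u) by (apply Rmult_le_compat_l; lra).
assert ((1 - l) * (exp m * (1 + (v - m))) <= (1 - l) * exp v) by (apply Rmult_le_compat_l; lra).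
assert (l * (exp m * (1 + (u - m))) + (1 - l) * (exp m * (1 + (v - m))) = exp m)
  by (unfold m; ring).
lra.
Qed.

Lemma Rpower_weighted_AM_GM u v l : 0 < u -> 0 < v -> 0 <= l <= 1 ->
  Rpower u l * Rpower v (1 - l) <= l * u + (1 - l) * v.
Proof.
intros Hu Hv Hl; assert (H := exp_convex l (ln u) (ln v) Hl).
rewrite !exp_ln in H by assumption.
unfold Rpower; rewrite <- exp_plus; exact H.
Qed.

Lemma Gamma_integrand_interp p q l t : 0 < t ->
  Gamma_integrand (l * p + (1 - l) * q) t =
  Rpower (Gamma_integrand p t) l * Rpower (Gamma_integrand q t) (1 - l).
Proof.
intros Ht; rewrite !Gamma_integrand_exp by exact Ht.
unfold Rpower; rewrite !ln_exp, <- exp_plus; f_equal; ring.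
Qed.

(* Hoelder's inequality for Euler's integral, obtained by integrating the pointwise
   weighted AM-GM inequality after normalizing [f_p] and [f_q] by [Gamma p], [Gamma q]. *)
Lemma Gamma_log_convex p q l : 0 < p -> 0 < q -> 0 <= l <= 1 ->
  Gamma (l * p + (1 - l) * q) <= Rpower (Gamma p) l * Rpower (Gamma q) (1 - l).
Proof.
intros Hp Hq Hl; set (x := l * p + (1 - l) * q).
assert (Hx : 0 < x) by (unfold x; nra).
set (F := Gamma p); set (G := Gamma q).
assert (HF : 0 < F) by now apply Gamma_pos.
assert (HG : 0 < G) by now apply Gamma_pos.
set (K := Rpower F l * Rpower G (1 - l)).
set (c1 := K * l / F); set (c2 := K * (1 - l) / G).
assert (Hpt : forall t, 0 < t ->
  Gamma_integrand x t <= c1 * Gamma_integrand p t + c2 * Gamma_integrand q t).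
{ intros t Ht; unfold x; rewrite Gamma_integrand_interp by exact Ht.
  assert (Hfp := Gamma_integrand_pos p t Ht); assert (Hfq := Gamma_integrand_pos q t Ht).
  replace (Gamma_integrand p t) with (F * (Gamma_integrand p t / F)) at 1 by (field; lra).
  replace (Gamma_integrand q t) with (G * (Gamma_integrand q t / G)) at 1 by (field; lra).
  rewrite <- !Rpower_mult_distr by (try apply Rdiv_lt_0_compat; assumption).
  replace (c1 * Gamma_integrand p t + c2 * Gamma_integrand q t) with
    (K * (l * (Gamma_integrand p t / F) + (1 - l) * (Gamma_integrand q t / G)))
    by (unfold c1, c2; field; lra).
  replace (Rpower F l * Rpower (Gamma_integrand p t / F) l *
           (Rpower G (1 - l) * Rpower (Gamma_integrand q t / G) (1 - l))) with
    (K * (Rpower (Gamma_integrand p t / F) l * Rpower (Gamma_integrand q t / G) (1 - l)))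
    by (unfold K; ring).
  apply Rmult_le_compat_l; [unfold K, Rpower; apply Rlt_le, Rmult_lt_0_compat; apply exp_pos |].
  apply Rpower_weighted_AM_GM; [apply Rdiv_lt_0_compat; assumption .. | exact Hl]. }
assert (HK : K = c1 * F + c2 * G) by (unfold c1, c2; field; lra).
rewrite HK; change (Rbar_le (Gamma x) (c1 * F + c2 * G)).
refine (is_lim_seq_le _ (fun n => c1 * RInt (Gamma_integrand p) (/ (INR n + 2)) (INR n + 2)
  + c2 * RInt (Gamma_integrand q) (/ (INR n + 2)) (INR n + 2)) _ _ _ (Gamma_lim x Hx) _).
- intros n; assert (Hn := pos_INR n).
  set (a := / (INR n + 2)); set (b := INR n + 2).
  assert (Ha : 0 < a) by (apply Rinv_0_lt_compat; lra).
  assert (Hab : a <= b).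
  { apply Rle_trans with 1; [| unfold b; lra].
    rewrite <- Rinv_1; apply Rinv_le_contravar; lra. }
  assert (Hfp := ex_RInt_Gamma_integrand p a b Ha Hab).
  assert (Hfq := ex_RInt_Gamma_integrand q a b Ha Hab).
  assert (Hc1 := @ex_RInt_scal R_NormedModule _ _ _ c1 Hfp).
  assert (Hc2 := @ex_RInt_scal R_NormedModule _ _ _ c2 Hfq).
  assert (Hlin : RInt (fun t => c1 * Gamma_integrand p t + c2 * Gamma_integrand q t) a b
    = c1 * RInt (Gamma_integrand p) a b + c2 * RInt (Gamma_integrand q) a b).
  { rewrite (RInt_plus (V := R_CompleteNormedModule)) by assumption.
    rewrite (RInt_scal (V := R_CompleteNormedModule) (Gamma_integrand p)) by assumption.
    now rewrite (RInt_scal (V := R_CompleteNormedModule) (Gamma_integrand q)) by assumption. }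
  rewrite <- Hlin; apply RInt_le; [exact Hab | now apply ex_RInt_Gamma_integrand | |].
  + apply (@ex_RInt_plus R_NormedModule); assumption.
  + intros t Ht; apply Hpt; lra.
- apply is_lim_seq_plus'; apply (is_lim_seq_scal_l _ _ (Finite _)); now apply Gamma_lim.
Qed.

Lemma Gamma_shift_le x y h : 0 < x -> x <= y -> 0 <= h ->
  Gamma (x + h) * Gamma y <= Gamma x * Gamma (y + h).
Proof.
intros Hx Hxy Hh.
destruct (Req_dec (y + h - x) 0) as [Hd | Hd].
{ replace y with x by lra; replace h with 0 by lra; rewrite Rplus_0_r; lra. }
(* [x + h] and [y] are the convex combinations of [x] and [y + h] with weights [l] and [1 - l] *)
set (l := (y - x) / (y + h - x)).
assert (Hl : 0 <= l <= 1).
{ unfold l; split; [apply Rdiv_le_0_compat; lra |].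
  apply Rmult_le_reg_r with (y + h - x); [lra |]; field_simplify; lra. }
assert (G1 := Gamma_log_convex x (y + h) l Hx ltac:(lra) Hl).
assert (G2 := Gamma_log_convex x (y + h) (1 - l) Hx ltac:(lra) ltac:(lra)).
replace (l * x + (1 - l) * (y + h)) with (x + h) in G1 by (unfold l; field; lra).
replace ((1 - l) * x + (1 - (1 - l)) * (y + h)) with y in G2 by (unfold l; field; lra).
assert (P1 := Gamma_pos (x + h) ltac:(lra)); assert (P2 := Gamma_pos y ltac:(lra)).
apply Rle_trans with (Rpower (Gamma x) l * Rpower (Gamma (y + h)) (1 - l) *
  (Rpower (Gamma x) (1 - l) * Rpower (Gamma (y + h)) (1 - (1 - l)))).
{ apply Rmult_le_compat; lra. }
replace (Rpower (Gamma x) l * Rpower (Gamma (y + h)) (1 - l) *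
  (Rpower (Gamma x) (1 - l) * Rpower (Gamma (y + h)) (1 - (1 - l)))) with
  (Rpower (Gamma x) (l + (1 - l)) * Rpower (Gamma (y + h)) ((1 - l) + (1 - (1 - l))))
  by (rewrite !Rpower_plus; ring).
replace (l + (1 - l)) with 1 by ring; replace (1 - l + (1 - (1 - l))) with 1 by ring.
rewrite !Rpower_1; [lra | apply Gamma_pos; lra ..].
Qed.

Lemma series_Series (u : nat -> R) : ex_series u -> series u = Series u.
Proof.
intros Hu; unfold series.
apply (uniqueness_sum u); [apply epsilon_spec; exists (Series u) |];
  apply is_series_Reals, Series_correct, Hu.
Qed.

Lemma Series_tail_pos (q : nat -> R) u : ex_series q -> (forall k, 0 < q k) ->
  0 < Series (fun j => q (u + j)%nat).
Proof.
intros Hq Hpos; apply (ex_series_incr_n q u) in Hq.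
rewrite Series_incr_1 by exact Hq; rewrite Nat.add_0_r.
assert (0 <= Series (fun j => q (u + S j)%nat)).
{ rewrite <- (Rmult_0_l (Series (fun j => q (u + S j)%nat))), <- Series_scal_l.
  apply Series_le; [intros j; specialize (Hpos (u + S j)%nat); split; lra |].
  now apply (ex_series_incr_1 (fun j => q (u + j)%nat)). }
specialize (Hpos u); lra.
Qed.

Lemma failure_rate_le (q : nat -> R) s t : ex_series q -> (forall k, 0 < q k) ->
  (forall j, q s * q (t + j)%nat <= q t * q (s + j)%nat) ->
  q s / Series (fun j => q (s + j)%nat) <= q t / Series (fun j => q (t + j)%nat).
Proof.
intros Hq Hpos Hcross.
assert (Hs := Series_tail_pos q s Hq Hpos); assert (Ht := Series_tail_pos q t Hq Hpos).
assert (Htails : q s * Series (fun j => q (t + j)%nat) <= q t * Series (fun j => q (s + j)%nat)).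
{ rewrite <- !Series_scal_l; apply Series_le.
  - intros j; split; [apply Rlt_le, Rmult_lt_0_compat; apply Hpos | apply Hcross].
  - apply (@ex_series_scal_l R_AbsRing R_NormedModule), (ex_series_incr_n q s), Hq. }
apply Rmult_le_reg_r with (Series (fun j => q (s + j)%nat) * Series (fun j => q (t + j)%nat));
  [nra |].
replace (q s / _ * _) with (q s * Series (fun j => q (t + j)%nat)) by (field; lra).
replace (q t / _ * _) with (q t * Series (fun j => q (s + j)%nat)) by (field; lra).
exact Htails.
Qed.

Section MittagLefflerWeights.

Variables lambda alpha beta : R.
Hypotheses (hl : 0 < lambda) (ha : 0 < alpha) (hb : 0 < beta).

Definition ml_weight (k : nat) : R := lambda ^ k / Gamma (alpha * INR k + beta).

Let arg_pos k : 0 < alpha * INR k + beta.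
Proof. assert (0 <= INR k) by apply pos_INR; nra. Qed.

Lemma ml_weight_pos k : 0 < ml_weight k.
Proof. apply Rdiv_lt_0_compat; [now apply pow_lt | apply Gamma_pos, arg_pos]. Qed.

Lemma ml_weight_cross s t j : (s <= t)%nat ->
  ml_weight s * ml_weight (t + j) <= ml_weight t * ml_weight (s + j).
Proof.
intros Hst; unfold ml_weight; rewrite !plus_INR, !pow_add.
set (x := alpha * INR s + beta); set (y := alpha * INR t + beta); set (h := alpha * INR j).
assert (Hxy : x <= y) by (apply le_INR in Hst; unfold x, y; nra).
assert (Hh : 0 <= h) by (assert (0 <= INR j) by apply pos_INR; unfold h; nra).
replace (alpha * (INR t + INR j) + beta) with (y + h) by (unfold y, h; ring).
replace (alpha * (INR s + INR j) + beta) with (x + h) by (unfold x, h; ring).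
assert (Hx := arg_pos s); fold x in Hx.
assert (G := Gamma_shift_le x y h Hx Hxy Hh).
assert (P1 := Gamma_pos x Hx); assert (P2 := Gamma_pos y ltac:(lra)).
assert (P3 := Gamma_pos (x + h) ltac:(lra)); assert (P4 := Gamma_pos (y + h) ltac:(lra)).
assert (Hpow : 0 < lambda ^ s * lambda ^ t * lambda ^ j)
  by (apply Rmult_lt_0_compat; [apply Rmult_lt_0_compat |]; now apply pow_lt).
apply Rmult_le_reg_r with (Gamma x * Gamma y * Gamma (x + h) * Gamma (y + h));
  [apply Rmult_lt_0_compat; [apply Rmult_lt_0_compat; [apply Rmult_lt_0_compat |] |]; lra |].
replace (lambda ^ s / Gamma x * (lambda ^ t * lambda ^ j / Gamma (y + h)) * _) with
  (lambda ^ s * lambda ^ t * lambda ^ j * (Gamma y * Gamma (x + h))) by (field; lra).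
replace (lambda ^ t / Gamma y * (lambda ^ s * lambda ^ j / Gamma (x + h)) * _) with
  (lambda ^ s * lambda ^ t * lambda ^ j * (Gamma x * Gamma (y + h))) by (field; lra).
apply Rmult_le_compat_l; lra.
Qed.

(* With [M^alpha = 2 lambda + 1], the lower bound on [Gamma] at [M] beats [lambda^k]. *)
Lemma ml_weight_le_geometric : exists C,
  forall k, ml_weight k <= C * (lambda / (2 * lambda + 1)) ^ k.
Proof.
set (M := Rpower (2 * lambda + 1) (/ alpha)).
assert (HM : 1 <= M).
{ unfold M, Rpower; rewrite <- exp_0 at 1; apply exp_le_compat.
  apply Rmult_le_pos; [apply Rlt_le, Rinv_0_lt_compat, ha |].
  rewrite <- ln_1; apply ln_le; lra. }
set (c := Rpower M (beta - 1) / 2 * exp (- (M + 1))).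
assert (Hc : 0 < c).
{ apply Rmult_lt_0_compat; [apply Rdiv_lt_0_compat; [apply exp_pos | lra] | apply exp_pos]. }
exists (/ c); intros k.
assert (HG := Gamma_lower_bound _ M (arg_pos k) HM).
replace (Rpower M (alpha * INR k + beta - 1)) with ((2 * lambda + 1) ^ k * Rpower M (beta - 1))
  in HG.
2:{ replace (alpha * INR k + beta - 1) with (alpha * INR k + (beta - 1)) by ring.
    rewrite Rpower_plus; f_equal; unfold M; rewrite Rpower_mult.
    replace (/ alpha * (alpha * INR k)) with (INR k) by (field; lra).
    symmetry; apply Rpower_pow; lra. }
assert (Hp : 0 < (2 * lambda + 1) ^ k) by (apply pow_lt; lra).
assert (Hlk : 0 < lambda ^ k) by now apply pow_lt.
unfold ml_weight; unfold Rdiv at 2; rewrite Rpow_mult_distr, pow_inv.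
replace (/ c * (lambda ^ k * / (2 * lambda + 1) ^ k)) with
  (lambda ^ k / ((2 * lambda + 1) ^ k * c)) by (field; lra).
apply Rmult_le_compat_l; [lra |].
apply Rinv_le_contravar; [apply Rmult_lt_0_compat; assumption |].
unfold c in *; lra.
Qed.

Lemma ex_series_ml_weight : ex_series ml_weight.
Proof.
destruct ml_weight_le_geometric as [C HC].
apply (@ex_series_le R_AbsRing R_CompleteNormedModule _
  (fun k => C * (lambda / (2 * lambda + 1)) ^ k)).
- intros k; rewrite Rabs_pos_eq by apply Rlt_le, ml_weight_pos; apply HC.
- apply (@ex_series_scal_l R_AbsRing R_NormedModule), ex_series_geom.
  rewrite Rabs_pos_eq by (apply Rlt_le, Rdiv_lt_0_compat; lra).
  apply Rmult_lt_reg_r with (2 * lambda + 1); [lra |]; field_simplify; lra.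
Qed.

Lemma ML_pos : 0 < ML alpha beta lambda.
Proof.
unfold ML; fold ml_weight; rewrite series_Series by exact ex_series_ml_weight.
apply (Series_tail_pos _ 0 ex_series_ml_weight ml_weight_pos).
Qed.

Lemma mlfd_rate_eq t : mlfd_rate lambda alpha beta t =
  ml_weight t / Series (fun j => ml_weight (t + j)).
Proof.
assert (HE := ML_pos).
assert (Hpmf : forall k, mlfd_pmf lambda alpha beta k = ml_weight k / ML alpha beta lambda).
{ intros k; unfold mlfd_pmf, ml_weight; assert (H := Gamma_pos _ (arg_pos k)); field; lra. }
assert (Htail := Series_tail_pos _ t ex_series_ml_weight ml_weight_pos).
assert (Hseries : ex_series (fun j => ml_weight (t + j) / ML alpha beta lambda)).
{ apply ex_series_scal_r, (ex_series_incr_n ml_weight t).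
  exact ex_series_ml_weight. }
unfold mlfd_rate, mlfd_tail; rewrite Hpmf, series_Series.
- rewrite (Series_ext _ (fun j => ml_weight (t + j) / ML alpha beta lambda))
    by (intros j; apply Hpmf).
  unfold Rdiv at 3; rewrite Series_scal_r; field; lra.
- eapply ex_series_ext; [intros j; symmetry; apply Hpmf | exact Hseries].
Qed.

End MittagLefflerWeights.

Theorem mainTheorem8 (lambda alpha beta : R) (hl : 0 < lambda) (ha : 0 < alpha)
  (hb : 0 < beta) (s t : nat) (hst : (s <= t)%nat) :
  mlfd_rate lambda alpha beta s <= mlfd_rate lambda alpha beta t.
Proof.
rewrite !mlfd_rate_eq by assumption.
apply failure_rate_le.
- now apply ex_series_ml_weight.
- now apply ml_weight_pos.
- intros j; now apply ml_weight_cross.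
Qed.
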